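(* Let $\mathbb{U}$ be a monster model of CODF, $K\preceq\mathbb{U}$ a small model, and $a\in\mathbb{U}$ such that $\dim(\bar\delta^{n-1}(a)/K)=n$. Then there is $b\in\mathbb{U}$ such that $tp(\bar\delta^{n-1}(b)/K)=tp(\bar\delta^{n-1}(a)/K)$ and $\delta^k(b)=0$ for all $k\geq n$.
   Context: CODF is the theory of closed ordered differential fields (model completion of the theory of ordered fields with a derivation $\delta$, no compatibility with the order assumed); its models are real closed. $\bar\delta^{n-1}(a)=(a,\delta(a),\dots,\delta^{n-1}(a))\in\mathbb{U}^n$. $tp(\cdot/K)$ denotes the type in the ordered ring language $\{<,+,\cdot,0,1\}$, and $\dim(c/K)$ is the o-minimal (topological) dimension of $tp(c/K)$ in the real closed field $\mathbb{U}$, i.e. the minimal dimension of a semialgebraic set over $K$ containing $c$. *)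

From HB Require Import structures.
From mathcomp Require Import all_boot all_order all_algebra.
From mathcomp Require Import mpoly.
From Stdlib Require List.
Set Implicit Arguments. Unset Strict Implicit. Unset Printing Implicit Defensive.
Import Order.TTheory GRing.Theory Num.Theory.
Local Open Scope ring_scope.

Inductive term (R : Type) : Type :=
| TVar of nat
| TPar of R
| TZero
| TOne
| TAdd of term R & term R
| TNeg of term R
| TMul of term R & term R
| TDer of term R.

Inductive form (R : Type) : Type :=
| FTrue
| FEq of term R & term R
| FLt of term R & term R
| FNot of form R
| FAnd of form R & form R
| FEx of nat & form R.

Arguments TZero {R}. Arguments TOne {R}. Arguments FTrue {R}.

Definition upd (R : Type) (e : nat -> R) (i : nat) (x : R) : nat -> R :=
  fun j => if j == i then x else e j.

Fixpoint teval (R : nzRingType) (d : R -> R) (e : nat -> R) (t : term R) : R :=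
  match t with
  | TVar i => e i
  | TPar c => c
  | TZero => 0
  | TOne => 1
  | TAdd t1 t2 => teval d e t1 + teval d e t2
  | TNeg t1 => - teval d e t1
  | TMul t1 t2 => teval d e t1 * teval d e t2
  | TDer t1 => d (teval d e t1)
  end.

(* Satisfaction in the structure whose domain is the subset [P] of R
   (quantifiers range over P); P = fun _ => True gives satisfaction in R. *)
Fixpoint fholds (R : numDomainType) (d : R -> R) (P : R -> Prop)
    (e : nat -> R) (f : form R) : Prop :=
  match f with
  | FTrue => True
  | FEq t1 t2 => teval d e t1 = teval d e t2
  | FLt t1 t2 => teval d e t1 < teval d e t2
  | FNot g => ~ fholds d P e g
  | FAnd g h => fholds d P e g /\ fholds d P e h
  | FEx i g => exists x, P x /\ fholds d P (upd e i x) g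
  end.

Definition allU (R : Type) : R -> Prop := fun _ => True.

Fixpoint t_params (R : Type) (A : R -> Prop) (t : term R) : Prop :=
  match t with
  | TVar _ | TZero | TOne => True
  | TPar c => A c
  | TAdd t1 t2 | TMul t1 t2 => t_params A t1 /\ t_params A t2
  | TNeg t1 | TDer t1 => t_params A t1
  end.

Fixpoint f_params (R : Type) (A : R -> Prop) (f : form R) : Prop :=
  match f with
  | FTrue => True
  | FEq t1 t2 | FLt t1 t2 => t_params A t1 /\ t_params A t2
  | FNot g | FEx _ g => f_params A g
  | FAnd g h => f_params A g /\ f_params A h
  end.

Fixpoint t_ring (R : Type) (t : term R) : Prop :=
  match t with
  | TVar _ | TPar _ | TZero | TOne => True
  | TAdd t1 t2 | TMul t1 t2 => t_ring t1 /\ t_ring t2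
  | TNeg t1 => t_ring t1
  | TDer _ => False
  end.

Fixpoint f_ring (R : Type) (f : form R) : Prop :=
  match f with
  | FTrue => True
  | FEq t1 t2 | FLt t1 t2 => t_ring t1 /\ t_ring t2
  | FNot g | FEx _ g => f_ring g
  | FAnd g h => f_ring g /\ f_ring h
  end.

Fixpoint f_qf (R : Type) (f : form R) : Prop :=
  match f with
  | FTrue | FEq _ _ | FLt _ _ => True
  | FNot g => f_qf g
  | FAnd g h => f_qf g /\ f_qf h
  | FEx _ _ => False
  end.

Definition is_derivation (R : nzRingType) (d : R -> R) : Prop :=
  (forall x y, d (x + y) = d x + d y) /\
  (forall x y, d (x * y) = x * d y + d x * y).

Definition jet (R : Type) (d : R -> R) (n : nat) (a : R) : 'I_n -> R :=
  fun i => iter i d a.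
Arguments jet {R} d n a _.

(* Axiom scheme of CODF (Singer; in the form of Brouette--Point) for a
   real closed field R with a derivation d: for every differential
   polynomial f(X) = f*(X, dX, ..., d^m X) of order m and every point c
   in R^(m+1) with f*(c) = 0 and separant (df*/dX_m)(c) <> 0, every open
   neighbourhood of c (basic open boxes suffice) contains d-jet d^m(b)
   of some zero b of f. *)
Definition CODF_axioms (R : rcfType) (d : R -> R) : Prop :=
  is_derivation d /\
  forall (m : nat) (f : {mpoly R[m.+1]}) (c : 'I_m.+1 -> R),
    meval c f = 0 -> meval c (mderiv ord_max f) != 0 ->
    forall lo hi : 'I_m.+1 -> R, (forall i, lo i < c i < hi i) ->
    exists b : R, meval (jet d m.+1 b) f = 0 /\
                  (forall i, lo i < jet d m.+1 b i < hi i).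

Definition elem_sub (R : numDomainType) (d : R -> R) (K : R -> Prop) : Prop :=
  [/\ K 0, K 1,
      (forall x y, K x -> K y -> [/\ K (x + y), K (- x) & K (x * y)]),
      (forall x, K x -> K (d x)) &
      forall (f : form R) (e : nat -> R), f_params K f -> (forall i, K (e i)) ->
        (fholds d K e f <-> fholds d (@allU R) e f)].

(* |K|^+-saturation of (R, d): every set of formulas in one variable
   (variable assignment constant equal to x), with parameters from a set A
   of cardinality at most |K|, which is finitely satisfiable in R, is
   realized in R. *)
Definition saturated_over (R : numDomainType) (d : R -> R) (K : R -> Prop) : Prop :=
  forall (A : R -> Prop),
    (exists g : {x | A x} -> {x | K x}, injective g) ->
    forall Sigma : form R -> Prop,
      (forall f, Sigma f -> f_params A f) ->
      (forall l : list (form R), (forall f, List.In f l -> Sigma f) ->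
         exists x, forall f, List.In f l -> fholds d (@allU R) (fun _ => x) f) ->
      exists x, forall f, Sigma f -> fholds d (@allU R) (fun _ => x) f.

Definition ext (R : nzRingType) (n : nat) (c : 'I_n -> R) : nat -> R :=
  fun i => match insub i with Some j => c j | None => 0 end.

Definition tp_eq (R : numDomainType) (d : R -> R) (K : R -> Prop) (n : nat)
    (c c' : 'I_n -> R) : Prop :=
  forall f : form R, f_ring f -> f_params K f ->
    (fholds d (@allU R) (ext c) f <-> fholds d (@allU R) (ext c') f).

Definition semialg_over (R : numDomainType) (d : R -> R) (K : R -> Prop)
    (n : nat) (S : ('I_n -> R) -> Prop) : Prop :=
  exists f : form R, [/\ f_ring f, f_qf f, f_params K f &
    forall x, S x <-> fholds d (@allU R) (ext x) f].

Definition nonempty_interior (R : numDomainType) (k : nat)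
    (T : ('I_k -> R) -> Prop) : Prop :=
  exists lo hi : 'I_k -> R, (forall i, lo i < hi i) /\
    forall x : 'I_k -> R, (forall i, lo i < x i < hi i) -> T x.

Definition has_dim (R : numDomainType) (n : nat) (S : ('I_n -> R) -> Prop)
    (k : nat) : Prop :=
  (exists s : 'I_k -> 'I_n, injective s /\
     nonempty_interior (fun y : 'I_k -> R => exists x, S x /\ forall i, y i = x (s i))) /\
  (forall (k' : nat) (s : 'I_k' -> 'I_n), injective s ->
     nonempty_interior (fun y : 'I_k' -> R => exists x, S x /\ forall i, y i = x (s i)) ->
     (k' <= k)%N).

Definition dim_over (R : numDomainType) (d : R -> R) (K : R -> Prop) (n : nat)
    (c : 'I_n -> R) (k : nat) : Prop :=
  (exists S, [/\ semialg_over d K S, S c & has_dim S k]) /\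
  (forall S k', semialg_over d K S -> S c -> has_dim S k' -> (k <= k')%N).

(* Since dim(a-bar/K) = n, where a-bar is the jet (a, ..., delta^(n-1) a), the
   jet a-bar is an interior point of every set that contains it and is definable over K in the
   ordered ring language: otherwise the non-interior points of that set would form a set which
   contains a-bar, has empty interior, hence dimension < n, and is semialgebraic over K by
   quantifier elimination for real closed fields (the parameters being moved into K by
   elementarity).  The CODF axiom for delta^n X = 0 puts the n-jet of a solution in every open
   box.  Hence every finite part of tp(a-bar/K), read through x |-> (x, ..., delta^(n-1) x),
   together with delta^n x = 0, is satisfiable, and saturation yields b. *)

From HB Require Import structures.
From mathcomp Require Import all_boot all_order all_algebra.
From mathcomp Require Import mpoly zify.
From mathcomp.real_closed Require Import ordered_qelim.
From mathcomp.real_closed Require qe_rcf.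
From Stdlib Require Import Classical FunctionalExtensionality.
From Stdlib Require List.
Set Implicit Arguments. Unset Strict Implicit. Unset Printing Implicit Defensive.
Import Order.TTheory GRing.Theory Num.Theory.
Local Open Scope ring_scope.

Fixpoint t_ub_var (R : Type) (t : term R) : nat :=
  match t with
  | TVar i => i.+1
  | TAdd t1 t2 | TMul t1 t2 => maxn (t_ub_var t1) (t_ub_var t2)
  | TNeg t1 | TDer t1 => t_ub_var t1
  | _ => 0
  end.

Fixpoint f_ub_var (R : Type) (f : form R) : nat :=
  match f with
  | FTrue => 0
  | FEq t1 t2 | FLt t1 t2 => maxn (t_ub_var t1) (t_ub_var t2)
  | FNot g | FEx _ g => f_ub_var g
  | FAnd g h => maxn (f_ub_var g) (f_ub_var h)
  end.

Section Semantics.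
Variables (R : numDomainType) (d : R -> R) (P : R -> Prop).

Lemma teval_eq_on (e e' : nat -> R) (t : term R) :
  (forall i, (i < t_ub_var t)%N -> e i = e' i) -> teval d e t = teval d e' t.
Proof.
elim: t => //= [i|t1 IH1 t2 IH2|t1 IH1|t1 IH1 t2 IH2|t1 IH1] eq_ee'.
- exact: eq_ee'.
- by rewrite IH1 ?IH2 // => i lt_i; apply: eq_ee'; rewrite leq_max lt_i ?orbT.
- by rewrite IH1.
- by rewrite IH1 ?IH2 // => i lt_i; apply: eq_ee'; rewrite leq_max lt_i ?orbT.
- by rewrite IH1.
Qed.

Lemma fholds_eq_on (B : nat) (e e' : nat -> R) (f : form R) :
  (f_ub_var f <= B)%N -> (forall i, (i < B)%N -> e i = e' i) ->
  (fholds d P e f <-> fholds d P e' f).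
Proof.
have eq_onW m e1 e2 : (m <= B)%N -> (forall i, (i < B)%N -> e1 i = e2 i :> R) ->
    forall i, (i < m)%N -> e1 i = e2 i.
  by move=> le_mB eq12 i lt_im; apply: eq12; apply: leq_trans le_mB.
elim: f e e' => //= [t1 t2|t1 t2|g IH|g IHg h IHh|i g IH] e e'.
- rewrite geq_max => /andP[le1 le2] eq_ee'.
  by rewrite (teval_eq_on (eq_onW _ _ _ le1 eq_ee')) (teval_eq_on (eq_onW _ _ _ le2 eq_ee')).
- rewrite geq_max => /andP[le1 le2] eq_ee'.
  by rewrite (teval_eq_on (eq_onW _ _ _ le1 eq_ee')) (teval_eq_on (eq_onW _ _ _ le2 eq_ee')).
- by move=> le_B eq_ee'; rewrite (IH e e').
- by rewrite geq_max => /andP[le1 le2] eq_ee'; rewrite (IHg e e') // (IHh e e').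
- move=> le_B eq_ee'.
  have eq_upd x j : (j < B)%N -> upd e i x j = upd e' i x j.
    by rewrite /upd; case: eqP => // _; apply: eq_ee'.
  have eqv x := IH (upd e i x) (upd e' i x) le_B (eq_upd x).
  by split=> -[x [Px /eqv hold]]; exists x.
Qed.

Lemma fholds_eq_env (e e' : nat -> R) (f : form R) :
  fholds d P e f -> e =1 e' -> fholds d P e' f.
Proof. by move=> hf /functional_extensionality <-. Qed.

End Semantics.

Definition FImp (R : Type) (f g : form R) : form R := FNot (FAnd f (FNot g)).
Definition FIff (R : Type) (f g : form R) : form R := FAnd (FImp f g) (FImp g f).
Definition FExs (R : Type) (vs : seq nat) (g : form R) : form R := foldr (@FEx R) g vs.
Definition FAlls (R : Type) (vs : seq nat) (g : form R) : form R :=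
  FNot (FExs vs (FNot g)).
Definition FBigAnd (R : Type) (fs : seq (form R)) : form R := foldr (@FAnd R) FTrue fs.

Lemma FExs_params (R : Type) (A : R -> Prop) vs (g : form R) :
  f_params A g -> f_params A (FExs vs g).
Proof. by elim: vs. Qed.

Lemma FExs_ring (R : Type) vs (g : form R) : f_ring g -> f_ring (FExs vs g).
Proof. by elim: vs. Qed.

Definition override (T : Type) (e w : nat -> T) (vs : seq nat) : nat -> T :=
  fun j => if j \in vs then w j else e j.

Lemma ext_ord (R : nzRingType) n (c : 'I_n -> R) (i : 'I_n) : ext c i = c i.
Proof.
rewrite /ext; case: insubP => [j _ /val_inj -> //|]; by rewrite ltn_ord.
Qed.

Lemma ext_lt (R : nzRingType) n (c : 'I_n -> R) j (lt_jn : (j < n)%N) :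
  ext c j = c (Ordinal lt_jn).
Proof. by rewrite -ext_ord. Qed.

Lemma ext_ge (R : nzRingType) n (c : 'I_n -> R) j : (n <= j)%N -> ext c j = 0.
Proof. by rewrite /ext; case: insubP => // k lt_kn _; rewrite leqNgt lt_kn. Qed.

Lemma ext_valued (R : nzRingType) (Q : R -> Prop) n (c : 'I_n -> R) :
  Q 0 -> (forall i, Q (c i)) -> forall j, Q (ext c j).
Proof. by move=> Q0 Qc j; rewrite /ext; case: insub. Qed.

Definition set_block (R : nzRingType) (e : nat -> R) m k (v : 'I_k -> R) : nat -> R :=
  override e (fun j => ext v (j - m)) (iota m k).

Section Blocks.
Variables (R : nzRingType) (e : nat -> R) (m k : nat) (v : 'I_k -> R).

Lemma set_block_at j : (j < k)%N -> set_block e m v (m + j)%N = ext v j.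
Proof.
by move=> lt_jk; rewrite /set_block /override mem_iota leq_addr ltn_add2l lt_jk addKn.
Qed.

Lemma set_block_in (i : 'I_k) : set_block e m v (m + i)%N = v i.
Proof. by rewrite set_block_at ?ext_ord. Qed.

Lemma set_block_lt j : (j < m)%N -> set_block e m v j = e j.
Proof. by rewrite /set_block /override mem_iota ltnNge => /negbTE ->. Qed.

Lemma set_block_ge j : (m + k <= j)%N -> set_block e m v j = e j.
Proof. by rewrite /set_block /override mem_iota ltnNge => ->; rewrite andbF. Qed.

Lemma set_block_valued (Q : R -> Prop) :
  Q 0 -> (forall j, Q (e j)) -> (forall i, Q (v i)) -> forall j, Q (set_block e m v j).
Proof.
by move=> Q0 Qe Qv j; rewrite /set_block /override; case: ifP => _; [apply: ext_valued|].
Qed.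

End Blocks.

Lemma set_block0 (R : nzRingType) (e : nat -> R) k (v : 'I_k -> R) j :
  (j < k)%N -> set_block e 0 v j = ext v j.
Proof. exact: (set_block_at e 0 v). Qed.

Section Connectives.
Variables (R : numDomainType) (d : R -> R) (P : R -> Prop).

Lemma FImpP e (f g : form R) :
  fholds d P e (FImp f g) <-> (fholds d P e f -> fholds d P e g).
Proof.
split=> [nfg hf|fg [hf ng]]; last exact: ng (fg hf).
by apply: NNPP => ng; apply: nfg.
Qed.

Lemma FIffP e (f g : form R) :
  fholds d P e (FIff f g) <-> (fholds d P e f <-> fholds d P e g).
Proof.
split=> [[/FImpP fg /FImpP gf] //|[fg gf]].
by split; apply/FImpP.
Qed.

Lemma FExsP e vs (g : form R) :
  fholds d P e (FExs vs g) <->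
  exists w, (forall j, j \in vs -> P (w j)) /\ fholds d P (override e w vs) g.
Proof.
elim: vs e => [|v vs IH] e /=.
  split=> [hg|[w [_ hg]]]; first by exists e.
  exact: fholds_eq_env hg _.
split=> [[x [Px /IH [w [Pw hg]]]]|[w [Pw hg]]].
  exists (fun j => if j \in vs then w j else x); split.
    by move=> j; case: ifP => [vs_j _|]; [apply: Pw | rewrite inE].
  apply: (fholds_eq_env hg) => j; rewrite /override /upd inE.
  by case: (j \in vs); rewrite ?orbT ?orbF //; case: eqP.
exists (w v); split; first by apply: Pw; rewrite inE eqxx.
apply/IH; exists w; split=> [j vs_j|]; first by apply: Pw; rewrite inE vs_j orbT.
apply: (fholds_eq_env hg) => j; rewrite /override /upd inE.
by case: (j \in vs); rewrite ?orbT ?orbF //; case: eqP => [->|].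
Qed.

Lemma FExs_blockP e m k (g : form R) :
  fholds d P e (FExs (iota m k) g) <->
  exists v : 'I_k -> R, (forall i, P (v i)) /\ fholds d P (set_block e m v) g.
Proof.
rewrite FExsP; split=> [[w [Pw hg]]|[v [Pv hg]]].
  exists (fun i : 'I_k => w (m + i)%N); split=> [i|].
    by apply: Pw; rewrite mem_iota leq_addr ltn_add2l ltn_ord.
  apply: (fholds_eq_env hg) => j; rewrite /set_block /override.
  case: ifP => //; rewrite mem_iota => /andP[le_mj lt_j].
  have lt_jm : (j - m < k)%N by rewrite ltn_subLR.
  by rewrite (ext_lt _ lt_jm) /= subnKC.
exists (fun j => ext v (j - m)); split=> // j; rewrite mem_iota => /andP[le_mj lt_j].
have lt_jm : (j - m < k)%N by rewrite ltn_subLR.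
by rewrite (ext_lt _ lt_jm).
Qed.

Lemma FAlls_blockP e m k (g : form R) :
  fholds d P e (FAlls (iota m k) g) <->
  forall v : 'I_k -> R, (forall i, P (v i)) -> fholds d P (set_block e m v) g.
Proof.
rewrite /FAlls /= FExs_blockP; split=> [nex v Pv|all [v [Pv /= ng]]].
  by apply: NNPP => ng; apply: nex; exists v.
exact/ng/all.
Qed.

Lemma FBigAnd_mapP (T : eqType) e (g : T -> form R) (s : seq T) :
  fholds d P e (FBigAnd (map g s)) <-> (forall i, i \in s -> fholds d P e (g i)).
Proof.
elim: s => [|i s IH] /=; first by [].
rewrite IH; split=> [[hi hs] j|hs]; first by rewrite inE => /orP[/eqP->|/hs].
by split=> [|j s_j]; apply: hs; rewrite inE ?eqxx ?s_j ?orbT.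
Qed.

End Connectives.

Fixpoint to_ord_term (R : Type) (t : term R) : GRing.term R :=
  match t with
  | TVar i => GRing.Var R i
  | TPar c => GRing.Const c
  | TZero => GRing.NatConst R 0
  | TOne => GRing.NatConst R 1
  | TAdd t1 t2 => GRing.Add (to_ord_term t1) (to_ord_term t2)
  | TNeg t1 => GRing.Opp (to_ord_term t1)
  | TMul t1 t2 => GRing.Mul (to_ord_term t1) (to_ord_term t2)
  | TDer _ => GRing.NatConst R 0
  end.

Fixpoint to_ord_form (R : Type) (f : form R) : ord.formula R :=
  match f with
  | FTrue => ord.Bool true
  | FEq t1 t2 => ord.Equal (to_ord_term t1) (to_ord_term t2)
  | FLt t1 t2 => ord.Lt (to_ord_term t1) (to_ord_term t2)
  | FNot g => ord.Not (to_ord_form g)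
  | FAnd g h => ord.And (to_ord_form g) (to_ord_form h)
  | FEx i g => ord.Exists i (to_ord_form g)
  end.

Fixpoint of_ord_term (R : Type) (t : GRing.term R) : term R :=
  match t with
  | GRing.Var i => TVar R i
  | GRing.Const c => TPar c
  | GRing.NatConst n => iter n (TAdd TOne) TZero
  | GRing.Add t1 t2 => TAdd (of_ord_term t1) (of_ord_term t2)
  | GRing.Opp t1 => TNeg (of_ord_term t1)
  | GRing.NatMul t1 n => iter n (TAdd (of_ord_term t1)) TZero
  | GRing.Mul t1 t2 => TMul (of_ord_term t1) (of_ord_term t2)
  | GRing.Inv _ => TZero
  | GRing.Exp t1 n => iter n (TMul (of_ord_term t1)) TOne
  end.

Fixpoint of_ord_form (R : Type) (f : ord.formula R) : form R :=
  match f with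
  | ord.Bool b => if b then FTrue else FNot FTrue
  | ord.Equal t1 t2 => FEq (of_ord_term t1) (of_ord_term t2)
  | ord.Lt t1 t2 => FLt (of_ord_term t1) (of_ord_term t2)
  | ord.Le t1 t2 => FNot (FLt (of_ord_term t2) (of_ord_term t1))
  | ord.And g h => FAnd (of_ord_form g) (of_ord_form h)
  | ord.Or g h => FNot (FAnd (FNot (of_ord_form g)) (FNot (of_ord_form h)))
  | ord.Implies g h => FImp (of_ord_form g) (of_ord_form h)
  | ord.Not g => FNot (of_ord_form g)
  | ord.Unit _ | ord.Exists _ _ | ord.Forall _ _ => FTrue
  end.

Lemma of_ord_form_ring (R : Type) (f : ord.formula R) : f_ring (of_ord_form f).
Proof.
have ring_t (t : GRing.term R) : t_ring (of_ord_term t).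
  by elim: t => //= [n|t1 IH1 n|t1 IH1 n]; elim: n.
by elim: f => [[]|t1 t2|t1 t2|t1 t2|t|g ? h ?|g ? h ?|g ? h ?|g ?|i g ?|i g ?].
Qed.

Lemma of_ord_form_qf (R : Type) (f : ord.formula R) : f_qf (of_ord_form f).
Proof. by elim: f => [[]|t1 t2|t1 t2|t1 t2|t|g ? h ?|g ? h ?|g ? h ?|g ?|i g ?|i g ?]. Qed.

Section OrdFormulas.
Variables (R : rcfType) (d : R -> R).

Lemma to_ord_termE (s : seq R) (t : term R) :
  t_ring t -> GRing.eval s (to_ord_term t) = teval d (nth 0 s) t.
Proof.
by elim: t => //= [t1 IH1 t2 IH2 [/IH1-> /IH2->]|t1 IH1 /IH1->|t1 IH1 t2 IH2 [/IH1-> /IH2->]].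
Qed.

Lemma to_ord_form_rformula (f : form R) : ord.rformula (to_ord_form f).
Proof.
have rterm_t (t : term R) : GRing.rterm (to_ord_term t) by elim: t => //= t1 -> t2 ->.
by elim: f => //= [t1 t2|t1 t2|g -> h ->] //; rewrite (rterm_t t1) (rterm_t t2).
Qed.

Lemma to_ord_formP (s : seq R) (f : form R) :
  f_ring f -> (ord.holds s (to_ord_form f) <-> fholds d (@allU R) (nth 0 s) f).
Proof.
elim: f s => //= [t1 t2|t1 t2|g IH|g IHg h IHh|i g IH] s.
- by case=> r1 r2; rewrite !to_ord_termE.
- by case=> r1 r2; rewrite !to_ord_termE.
- by move=> /IH ->.
- by case=> /IHg-> /IHh->.
- move=> rg; have nth_set x : nth 0 (set_nth 0 s i x) =1 upd (nth 0 s) i x.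
    by move=> j; rewrite nth_set_nth /= /upd; case: (j == i).
  split=> [[x /IH hg]|[x [_ hg]]]; exists x.
    by split=> //; apply: fholds_eq_env (hg rg) _.
  by apply/IH => //; apply: fholds_eq_env hg _ => j; rewrite nth_set.
Qed.

Lemma of_ord_formP (s : seq R) (f : ord.formula R) :
  ord.qf_form f -> ord.rformula f ->
  (fholds d (@allU R) (nth 0 s) (of_ord_form f) <-> ord.holds s f).
Proof.
have evalE (t : GRing.term R) :
    GRing.rterm t -> teval d (nth 0 s) (of_ord_term t) = GRing.eval s t.
  elim: t => [i|c|n|t1 IH1 t2 IH2|t1 IH1|t1 IH1 n|t1 IH1 t2 IH2|t1 IH1|t1 IH1 n] //=.
  - by move=> _; elim: n => //= n ->; rewrite -[in RHS]addn1 natrD addrC.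
  - by move=> /andP[/IH1-> /IH2->].
  - by move=> /IH1->.
  - by move=> /IH1 E1; elim: n => //= n ->; rewrite E1 mulrS.
  - by move=> /andP[/IH1-> /IH2->].
  - by move=> /IH1 E1; elim: n => //= n ->; rewrite E1 exprS.
elim: f => [[]|t1 t2|t1 t2|t1 t2|t|g IHg h IHh|g IHg h IHh|g IHg h IHh|g IHg|i g _|i g _]
  //=.
- by move=> _ /andP[/evalE-> /evalE->].
- by move=> _ /andP[/evalE-> /evalE->].
- by move=> _ /andP[/evalE-> /evalE->]; rewrite leNgt; split=> /negP.
- by move=> /andP[qg qh] /andP[rg rh]; rewrite IHg // IHh.
- move=> /andP[qg qh] /andP[rg rh]; rewrite IHg // IHh //.
  split=> [ngh|[hg|hh] []//]; apply: NNPP => ngh'; apply: ngh.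
  by split=> ?; apply: ngh'; [left|right].
- move=> /andP[qg qh] /andP[rg rh]; rewrite IHg // IHh //.
  by split=> [ngh hg|gh [/gh]//]; apply: NNPP => nh; apply: ngh.
- by move=> qg rg; rewrite IHg.
Qed.

Lemma rcf_qe (f : form R) : f_ring f ->
  exists g, [/\ f_ring g, f_qf g &
                forall e, fholds d (@allU R) e f <-> fholds d (@allU R) e g].
Proof.
move=> rf; pose proj i bc := @qe_rcf.qfr_to_formula R (@qe_rcf.wproj R i bc).
pose q := ord.quantifier_elim proj (to_ord_form f).
have /andP[qf_q rq] : ord.qf_form q && ord.rformula q.
  by have := ord.quantifier_elim_wf (@qe_rcf.wf_QE_wproj R) (to_ord_form_rformula f).
exists (of_ord_form q); split=> [||e]; [exact: of_ord_form_ring | exact: of_ord_form_qf |].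
pose B := maxn (f_ub_var f) (f_ub_var (of_ord_form q)); pose s := mkseq e B.
have eq_es i : (i < B)%N -> e i = nth 0 s i by move=> lt_iB; rewrite nth_mkseq.
rewrite (fholds_eq_on _ _ (leq_maxl _ _) eq_es) (fholds_eq_on _ _ (leq_maxr _ _) eq_es).
rewrite -to_ord_formP // of_ord_formP //.
have /rwP -> := ord.quantifier_elim_rformP (@qe_rcf.wf_QE_wproj R) (@qe_rcf.valid_QE_wproj R)
  s (to_ord_form_rformula f).
by split=> /(ord.qf_evalP _ qf_q).
Qed.

End OrdFormulas.

Fixpoint t_paramlist (R : Type) (t : term R) : seq R :=
  match t with
  | TPar c => [:: c]
  | TAdd t1 t2 | TMul t1 t2 => t_paramlist t1 ++ t_paramlist t2
  | TNeg t1 | TDer t1 => t_paramlist t1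
  | _ => [::]
  end.

Fixpoint f_paramlist (R : Type) (f : form R) : seq R :=
  match f with
  | FTrue => [::]
  | FEq t1 t2 | FLt t1 t2 => t_paramlist t1 ++ t_paramlist t2
  | FNot g | FEx _ g => f_paramlist g
  | FAnd g h => f_paramlist g ++ f_paramlist h
  end.

Fixpoint t_map_params (R : Type) (h : R -> term R) (t : term R) : term R :=
  match t with
  | TPar c => h c
  | TVar i => TVar R i
  | TZero => TZero
  | TOne => TOne
  | TAdd t1 t2 => TAdd (t_map_params h t1) (t_map_params h t2)
  | TNeg t1 => TNeg (t_map_params h t1)
  | TMul t1 t2 => TMul (t_map_params h t1) (t_map_params h t2)
  | TDer t1 => TDer (t_map_params h t1)
  end.

Fixpoint f_map_params (R : Type) (h : R -> term R) (f : form R) : form R :=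
  match f with
  | FTrue => FTrue
  | FEq t1 t2 => FEq (t_map_params h t1) (t_map_params h t2)
  | FLt t1 t2 => FLt (t_map_params h t1) (t_map_params h t2)
  | FNot g => FNot (f_map_params h g)
  | FAnd g g' => FAnd (f_map_params h g) (f_map_params h g')
  | FEx i g => FEx i (f_map_params h g)
  end.

Section MapParams.
Variable R : Type.
Implicit Types (A B : R -> Prop) (h : R -> term R) (t : term R) (f : form R).

Lemma t_params_sub A B t : t_params A t -> (forall c, A c -> B c) -> t_params B t.
Proof. by move=> + subAB; elim: t => //= *; intuition. Qed.

Lemma f_params_sub A B f : f_params A f -> (forall c, A c -> B c) -> f_params B f.
Proof. by move=> + subAB; elim: f => //= *; intuition; apply: t_params_sub subAB. Qed.

Lemma t_map_params_params A B h t :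
  (forall c, A c -> t_params B (h c)) -> t_params A t -> t_params B (t_map_params h t).
Proof. by move=> hAB; elim: t => //= *; intuition. Qed.

Lemma f_map_params_params A B h f :
  (forall c, A c -> t_params B (h c)) -> f_params A f -> f_params B (f_map_params h f).
Proof. by move=> hAB; elim: f => //= *; intuition; apply: t_map_params_params hAB _. Qed.

Lemma f_map_params_ring h f :
  (forall c, t_ring (h c)) -> f_ring f -> f_ring (f_map_params h f).
Proof.
move=> rh; have rt t : t_ring t -> t_ring (t_map_params h t) by elim: t => //= *; intuition.
by elim: f => //= *; intuition.
Qed.

Lemma f_map_params_qf h f : f_qf f -> f_qf (f_map_params h f).
Proof. by elim: f => //= *; intuition. Qed.

Lemma f_map_params_id f : f_map_params (@TPar R) f = f.
Proof.
have tid t : t_map_params (@TPar R) t = t by elim: t => //= [? -> ? ->|? ->|? -> ? ->|? ->].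
by elim: f => //= [? ?|? ?|? ->|? -> ? ->|? ? ->]; rewrite ?tid.
Qed.

End MapParams.

Section ParameterLists.
Variable R : eqType.

Lemma t_paramlist_params (t : term R) : t_params (fun c => c \in t_paramlist t) t.
Proof.
elim: t => //= [c|t1 IH1 t2 IH2|t1 IH1 t2 IH2]; first by rewrite inE.
all: by split; [apply: (t_params_sub IH1 (mem_subseq (prefix_subseq _ _))) |
                apply: (t_params_sub IH2 (mem_subseq (suffix_subseq _ _)))].
Qed.

Lemma f_paramlist_params (f : form R) : f_params (fun c => c \in f_paramlist f) f.
Proof.
elim: f => //= [t1 t2|t1 t2|g IHg h IHh]; split.
- exact: t_params_sub (t_paramlist_params t1) (mem_subseq (prefix_subseq _ _)).
- exact: t_params_sub (t_paramlist_params t2) (mem_subseq (suffix_subseq _ _)).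
- exact: t_params_sub (t_paramlist_params t1) (mem_subseq (prefix_subseq _ _)).
- exact: t_params_sub (t_paramlist_params t2) (mem_subseq (suffix_subseq _ _)).
- exact: f_params_sub IHg (mem_subseq (prefix_subseq _ _)).
- exact: f_params_sub IHh (mem_subseq (suffix_subseq _ _)).
Qed.

End ParameterLists.

Section MapParamsSemantics.
Variables (R : numDomainType) (d : R -> R) (P : R -> Prop).
Variables (e e' : nat -> R) (h h' : R -> term R).
Let same_value c := teval d e (h c) = teval d e' (h' c).

Lemma t_map_params_eval (t : term R) : t_params same_value t ->
  (forall i, (i < t_ub_var t)%N -> e i = e' i) ->
  teval d e (t_map_params h t) = teval d e' (t_map_params h' t).
Proof.
elim: t => //= [i|t1 IH1 t2 IH2|t1 IH1|t1 IH1 t2 IH2|t1 IH1] ht eq_ee'.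
- exact: eq_ee'.
- by case: ht => h1 h2; rewrite IH1 ?IH2 // => i lt_i;
    apply: eq_ee'; rewrite leq_max lt_i ?orbT.
- by rewrite IH1.
- by case: ht => h1 h2; rewrite IH1 ?IH2 // => i lt_i;
    apply: eq_ee'; rewrite leq_max lt_i ?orbT.
- by rewrite IH1.
Qed.

Lemma f_map_params_holds (f : form R) : f_qf f -> f_params same_value f ->
  (forall i, (i < f_ub_var f)%N -> e i = e' i) ->
  (fholds d P e (f_map_params h f) <-> fholds d P e' (f_map_params h' f)).
Proof.
have eq_onW m1 m2 : (forall i, (i < maxn m1 m2)%N -> e i = e' i) ->
    (forall i, (i < m1)%N -> e i = e' i) /\ (forall i, (i < m2)%N -> e i = e' i).
  by move=> eq_ee'; split=> i lt_i; apply: eq_ee'; rewrite leq_max lt_i ?orbT.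
elim: f => //= [t1 t2|t1 t2|g IH|g IHg g' IHg'].
- by move=> _ [p1 p2] /eq_onW[eq1 eq2]; rewrite !t_map_params_eval.
- by move=> _ [p1 p2] /eq_onW[eq1 eq2]; rewrite !t_map_params_eval.
- by move=> qg pg eq_ee'; rewrite IH.
- by move=> [qg qg'] [pg pg'] /eq_onW[eq1 eq2]; rewrite IHg // IHg'.
Qed.

End MapParamsSemantics.

Definition abstract_params (R : eqType) N (g : form R) : form R :=
  f_map_params (fun c => TVar R (N + index c (f_paramlist g))) g.

Lemma abstract_paramsP (R : numDomainType) (d : R -> R) (P : R -> Prop) N (g : form R)
    (val : R -> R) (E e : nat -> R) :
  f_qf g -> (f_ub_var g <= N)%N ->
  (forall c, c \in f_paramlist g -> E (N + index c (f_paramlist g))%N = val c) ->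
  (forall i, (i < N)%N -> E i = e i) ->
  (fholds d P E (abstract_params N g) <->
   fholds d P e (f_map_params (fun c => TPar (val c)) g)).
Proof.
move=> qg le_gN E_val eq_Ee; apply: f_map_params_holds => //.
  exact: f_params_sub (f_paramlist_params g) E_val.
by move=> i lt_i; apply: eq_Ee; apply: leq_trans lt_i le_gN.
Qed.

(* [rcf_qe] may use parameters outside [K].  Abstracting them into the variables [N + j]
   turns "some values of these parameters make the formula equivalent to [f]" into a sentence
   over [K]; it holds in [U], so by elementarity it is witnessed by values in [K]. *)
Lemma qe_elem_sub (R : rcfType) (d : R -> R) (K : R -> Prop) (f : form R) :
  elem_sub d K -> f_ring f -> f_params K f ->
  exists g, [/\ f_ring g, f_qf g, f_params K g &
                forall e, fholds d (@allU R) e f <-> fholds d (@allU R) e g].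
Proof.
move=> [K0 _ _ _ elemK] rf Kf.
have [g0 [rg0 qg0 g0E]] := rcf_qe d rf.
pose cs := f_paramlist g0; pose N := maxn (f_ub_var f) (f_ub_var g0).
have [le_fN le_g0N] : (f_ub_var f <= N)%N /\ (f_ub_var g0 <= N)%N.
  by rewrite leq_maxl leq_maxr.
pose Th := FExs (iota N (size cs)) (FAlls (iota 0 N) (FIff (abstract_params N g0) f)).
have E_params e0 (v : 'I_(size cs) -> R) (y : 'I_N -> R) c : c \in cs ->
    set_block (set_block e0 N v) 0 y (N + index c cs)%N = ext v (index c cs).
  by move=> cs_c; rewrite set_block_ge ?add0n ?leq_addr // set_block_at ?index_mem.
have ThU : fholds d (@allU R) (fun _ => 0) Th.
  apply/FExs_blockP; exists (fun i => nth 0 cs i); split=> //.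
  apply/FAlls_blockP => y _; apply/FIffP.
  rewrite g0E -[X in _ <-> fholds _ _ _ X]f_map_params_id.
  apply: abstract_paramsP => // c cs_c.
  have lt_c : (index c cs < size cs)%N by rewrite index_mem.
  by rewrite E_params // (ext_lt _ lt_c) nth_index.
have Kabstr : f_params K (abstract_params N g0).
  exact: f_map_params_params (f_paramlist_params g0).
have Kall : f_params K (FAlls (iota 0 N) (FIff (abstract_params N g0) f)) by apply: FExs_params.
have /FExs_blockP[v [Kv ThK]] : fholds d K (fun _ => 0) Th.
  by apply/elemK => //; apply: FExs_params.
have Ke : forall j, K (set_block (fun _ => 0) N v j) by apply: set_block_valued.
have /FAlls_blockP iffU := (elemK _ _ Kall Ke).1 ThK.
exists (f_map_params (fun c => TPar (ext v (index c cs))) g0); split.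
- exact: f_map_params_ring.
- exact: f_map_params_qf.
- apply: f_map_params_params (f_paramlist_params g0) => c _ /=.
  exact: ext_valued.
- move=> e; pose y := fun i : 'I_N => e i.
  have y_e i : (i < N)%N -> set_block (set_block (fun _ => 0) N v) 0 y i = e i.
    by move=> lt_iN; rewrite set_block0 // (ext_lt _ lt_iN).
  rewrite -(fholds_eq_on _ _ le_fN y_e).
  have /FIffP <- := iffU y (fun _ => I).
  by apply: abstract_paramsP => // c cs_c; rewrite E_params.
Qed.

Definition in_interior (R : numDomainType) n (S : ('I_n -> R) -> Prop) (x : 'I_n -> R) :=
  exists lo hi : 'I_n -> R, (forall i, lo i < x i < hi i) /\
    forall y : 'I_n -> R, (forall i, lo i < y i < hi i) -> S y.

Lemma nonempty_interiorP (R : realFieldType) n (S : ('I_n -> R) -> Prop) :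
  nonempty_interior S <-> exists x, in_interior S x.
Proof.
split=> [[lo [hi [lt_lohi box]]]|[x [lo [hi [hx box]]]]].
  exists (fun i => (lo i + hi i) / 2), lo, hi; split=> // i.
  by have [-> ->] := midf_lt (lt_lohi i).
exists lo, hi; split=> // i; have /andP[lo_x x_hi] := hx i; exact: lt_trans x_hi.
Qed.

Definition between_F (R : Type) (M n : nat) : form R :=
  FBigAnd [seq FAnd (FLt (TVar R (M + i)) (TVar R i)) (FLt (TVar R i) (TVar R (M + n + i)))
          | i <- iota 0 n].

(* Variables [0, n) hold the point and [M, M + n), [M + n, M + 2n) the corners of a box;
   [M] bounds the free variables of [Phi], so [Phi] does not see the corners. *)
Definition interiorF (R : Type) n (Phi : form R) : form R :=
  let M := maxn n (f_ub_var Phi) in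
  FExs (iota M n) (FExs (iota (M + n) n)
    (FAnd (between_F R M n) (FAlls (iota 0 n) (FImp (between_F R M n) Phi)))).

Lemma between_F_ring (R : Type) M n : f_ring (between_F R M n).
Proof. by rewrite /between_F; elim: (iota 0 n). Qed.

Lemma between_F_params (R : Type) (A : R -> Prop) M n : f_params A (between_F R M n).
Proof. by rewrite /between_F; elim: (iota 0 n). Qed.

Lemma interiorF_ring (R : Type) n (Phi : form R) : f_ring Phi -> f_ring (interiorF n Phi).
Proof.
move=> rPhi; have rb := between_F_ring R (maxn n (f_ub_var Phi)) n.
by do 2 apply: FExs_ring; split=> //; apply: FExs_ring.
Qed.

Lemma interiorF_params (R : Type) (A : R -> Prop) n (Phi : form R) :
  f_params A Phi -> f_params A (interiorF n Phi).
Proof.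
move=> pPhi; have pb := between_F_params A (maxn n (f_ub_var Phi)) n.
by do 2 apply: FExs_params; split=> //; apply: FExs_params.
Qed.

Section Interior.
Variables (R : numDomainType) (d : R -> R).

Lemma between_FP (e : nat -> R) M n (lo z hi : 'I_n -> R) :
  (forall i : 'I_n, [/\ e (M + i)%N = lo i, e i = z i & e (M + n + i)%N = hi i]) ->
  (fholds d (@allU R) e (between_F R M n) <-> forall i, lo i < z i < hi i).
Proof.
move=> vals; rewrite FBigAnd_mapP; split=> btw i.
  have [<- <- <-] := vals i; have : (i : nat) \in iota 0 n by rewrite mem_iota ltn_ord.
  by move=> /btw[-> ->].
rewrite mem_iota => /andP[_ lt_in]; have [/= -> -> ->] := vals (Ordinal lt_in).
by have /andP[-> ->] := btw (Ordinal lt_in).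
Qed.

Lemma interiorFP n (Phi : form R) (x : 'I_n -> R) :
  fholds d (@allU R) (ext x) (interiorF n Phi) <->
  in_interior (fun y => fholds d (@allU R) (ext y) Phi) x.
Proof.
rewrite /interiorF; set M := maxn n _.
have [le_nM le_PhiM] : (n <= M)%N /\ (f_ub_var Phi <= M)%N by rewrite leq_maxl leq_maxr.
pose F (lo hi : 'I_n -> R) := set_block (set_block (ext x) M lo) (M + n) hi.
have F_below lo hi j : (j < M)%N -> F lo hi j = ext x j.
  by move=> lt_jM; rewrite /F !set_block_lt // ltn_addr.
have F_lo lo hi (i : 'I_n) : F lo hi (M + i)%N = lo i.
  by rewrite /F set_block_lt ?set_block_in // ltn_add2l.
have F_hi lo hi (i : 'I_n) : F lo hi (M + n + i)%N = hi i by apply: set_block_in.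
have F_between lo hi : fholds d (@allU R) (F lo hi) (between_F R M n) <->
    forall i, lo i < x i < hi i.
  apply: between_FP => i; rewrite F_lo F_hi F_below ?ext_ord //.
  exact: leq_trans (ltn_ord i) le_nM.
have G_between lo hi (y : 'I_n -> R) :
    fholds d (@allU R) (set_block (F lo hi) 0 y) (between_F R M n) <->
    forall i, lo i < y i < hi i.
  apply: between_FP => i; have lt_in := ltn_ord i.
  split; [by rewrite set_block_ge ?F_lo //; lia | by rewrite set_block0 ?ext_ord |].
  by rewrite set_block_ge ?F_hi //; lia.
have G_Phi lo hi (y : 'I_n -> R) :
    fholds d (@allU R) (set_block (F lo hi) 0 y) Phi <-> fholds d (@allU R) (ext y) Phi.
  apply: fholds_eq_on le_PhiM _ => j lt_jM; have [lt_jn|le_nj] := ltnP j n.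
    by rewrite set_block0.
  by rewrite set_block_ge // F_below // !ext_ge.
split=> [|[lo [hi [x_in box]]]].
  case/FExs_blockP=> lo [_ /FExs_blockP[hi [_ [/F_between x_in /FAlls_blockP box]]]].
  exists lo, hi; split=> // y y_in.
  by have /FImpP := box y (fun _ => I); rewrite G_between G_Phi; apply.
apply/FExs_blockP; exists lo; split=> //; apply/FExs_blockP; exists hi; split=> //.
split; first exact/F_between.
by apply/FAlls_blockP => y _; apply/FImpP; rewrite G_between G_Phi; apply: box.
Qed.

End Interior.

Lemma classic_ex_maxn (Q : nat -> Prop) n :
  Q 0%N -> (forall k, Q k -> (k <= n)%N) ->
  exists k, Q k /\ forall k', Q k' -> (k' <= k)%N.
Proof.
move=> Q0 Q_le; apply: NNPP => no_max.
suff [k Qk lt_nk] : exists2 k, Q k & (n < k)%N by have := Q_le k Qk; rewrite leqNgt lt_nk.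
elim: n.+1 => [|m [k Qk le_mk]]; first by exists 0%N.
apply: NNPP => no_above; apply: no_max; exists k; split=> // k' Qk'.
rewrite leqNgt; apply/negP => lt_kk'; apply: no_above; exists k' => //.
exact: leq_ltn_trans le_mk lt_kk'.
Qed.

Lemma empty_interior_dim_lt (R : numDomainType) n (S : ('I_n -> R) -> Prop) c :
  S c -> ~ nonempty_interior S -> exists2 k, (k < n)%N & has_dim S k.
Proof.
move=> Sc S_empty.
pose Q k := exists s : 'I_k -> 'I_n, injective s /\
  nonempty_interior (fun y : 'I_k -> R => exists x, S x /\ forall i, y i = x (s i)).
have Q0 : Q 0%N.
  exists (widen_ord (leq0n n)); split=> [[]//|].
  by exists (fun _ => 0), (fun _ => 1); split=> [[]//|y _]; exists c; split=> // [[]].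
have Q_le k : Q k -> (k <= n)%N.
  by case=> s [inj_s _]; have := leq_card s inj_s; rewrite !card_ord.
have [k [Qk k_max]] := classic_ex_maxn Q0 Q_le.
exists k; last by split=> [|k' s inj_s int_s]; [|apply: k_max; exists s].
rewrite ltn_neqAle Q_le // andbT; apply/eqP => def_k; subst k.
case: Qk => s [inj_s [lo [hi [lt_lohi box]]]]; have [s' sK s'K] := injF_bij inj_s.
apply: S_empty; exists (fun j => lo (s' j)), (fun j => hi (s' j)); split=> // x x_in.
have x_in' i : lo i < x (s i) < hi i by have := x_in (s i); rewrite sK.
have [x' [Sx' def_x]] := box (fun i => x (s i)) x_in'.
by rewrite (functional_extensionality x x') // => j; rewrite -(s'K j) def_x.
Qed.

Lemma full_dim_in_interior (R : rcfType) (d : R -> R) (K : R -> Prop) n (c : 'I_n -> R)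
    (Phi : form R) :
  elem_sub d K -> dim_over d K c n -> f_ring Phi -> f_params K Phi ->
  fholds d (@allU R) (ext c) Phi -> in_interior (fun y => fholds d (@allU R) (ext y) Phi) c.
Proof.
move=> elemK [_ dim_min] rPhi KPhi Phi_c; apply: NNPP => c_bd.
pose S (x : 'I_n -> R) := fholds d (@allU R) (ext x) (FAnd Phi (FNot (interiorF n Phi))).
have semiS : semialg_over d K S.
  have [||g [rg qg Kg fg]] := @qe_elem_sub _ d K (FAnd Phi (FNot (interiorF n Phi))) elemK.
  - by split=> //; apply: interiorF_ring.
  - by split=> //; apply: interiorF_params.
  by exists g; split=> // x; apply: fg.
have Sc : S c by split=> // /interiorFP.
have S_empty : ~ nonempty_interior S.
  move=> /nonempty_interiorP[x [lo [hi [x_in box]]]].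
  have [_ x_bd] := box x x_in; apply: x_bd; apply/interiorFP.
  by exists lo, hi; split=> // y /box[].
have [k lt_kn dimS] := empty_interior_dim_lt Sc S_empty.
by have := dim_min S k semiS Sc dimS; rewrite leqNgt lt_kn.
Qed.

Lemma mderivXU (R : nzRingType) n (i : 'I_n) : ('X_i : {mpoly R[n]})^`M(i) = 1.
Proof.
rewrite mderivX mnm1E eqxx.
have -> : (U_(i) - U_(i))%MM = 0%MM by apply/mnmP => j; rewrite mnmBE subnn mnm0E.
by rewrite mpolyX0 scale1r.
Qed.

(* The CODF axiom applied to the differential polynomial [X^(n)], whose separant is 1. *)
Lemma codf_jets_dense (R : rcfType) (d : R -> R) n (lo hi : 'I_n -> R) :
  CODF_axioms d -> (forall i, lo i < hi i) ->
  exists b, (forall i, lo i < jet d n b i < hi i) /\ iter n d b = 0.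
Proof.
move=> [_ codf] lt_lohi.
pose c (i : 'I_n.+1) := ext (fun j : 'I_n => (lo j + hi j) / 2) i.
pose lo' i := if (i < n)%N then ext lo i else -1.
pose hi' i := if (i < n)%N then ext hi i else 1.
have c_in (i : 'I_n.+1) : lo' i < c i < hi' i.
  rewrite /lo' /hi' /c; case: ltnP => [lt_in|le_ni]; last by rewrite ext_ge // ltrN10 ltr01.
  by rewrite !(ext_lt _ lt_in); have [-> ->] := midf_lt (lt_lohi (Ordinal lt_in)).
have c_root : meval c ('X_(@ord_max n) : {mpoly R[n.+1]}) = 0 by rewrite mevalXU /c ext_ge.
have c_sep : meval c (('X_(@ord_max n) : {mpoly R[n.+1]})^`M(ord_max)) != 0.
  by rewrite mderivXU meval1 oner_neq0.
have [b [b_root b_in]] := codf n _ c c_root c_sep lo' hi' c_in.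
exists b; split; last by rewrite mevalXU in b_root.
move=> i; have := b_in (widen_ord (leqnSn n) i).
by rewrite /lo' /hi' /= ltn_ord !ext_ord.
Qed.

Lemma teval_iter_TDer (R : nzRingType) (d : R -> R) e j (t : term R) :
  teval d e (iter j (@TDer R) t) = iter j d (teval d e t).
Proof. by elim: j => //= j ->. Qed.

Definition jet_term (R : Type) n x j : term R :=
  if (j < n)%N then iter j (@TDer R) (TVar R x) else TZero.

(* Under the constant assignment [x], the free variable [M] denotes [x] and the bound
   variables [0, M) are set to the zero-padded n-jet of [x]. *)
Definition jetF (R : Type) n (Phi : form R) : form R :=
  let M := maxn n (f_ub_var Phi) in
  FExs (iota 0 M) (FAnd (FBigAnd [seq FEq (TVar R j) (jet_term R n M j) | j <- iota 0 M]) Phi).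

Lemma jetF_params (R : Type) (A : R -> Prop) n (Phi : form R) :
  f_params A Phi -> f_params A (jetF n Phi).
Proof.
move=> APhi; apply: FExs_params; split=> //.
have Aj j : t_params A (jet_term R n (maxn n (f_ub_var Phi)) j).
  by rewrite /jet_term; case: ifP => // _; elim: j.
by elim: (iota 0 _) => //= j s IH; split.
Qed.

Lemma jetFP (R : numDomainType) (d : R -> R) n (Phi : form R) x :
  fholds d (@allU R) (fun _ => x) (jetF n Phi) <-> fholds d (@allU R) (ext (jet d n x)) Phi.
Proof.
rewrite /jetF; set M := maxn n _.
have [le_nM le_PhiM] : (n <= M)%N /\ (f_ub_var Phi <= M)%N by rewrite leq_maxl leq_maxr.
have jet_termE (v : 'I_M -> R) j :
    teval d (set_block (fun _ => x) 0 v) (jet_term R n M j) = ext (jet d n x) j.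
  rewrite /jet_term; case: ltnP => [lt_jn|le_nj]; last by rewrite ext_ge.
  by rewrite teval_iter_TDer /= set_block_ge // (ext_lt _ lt_jn).
rewrite FExs_blockP; split=> [[v [_ [/FBigAnd_mapP v_jet Phi_v]]]|Phi_x].
  have E_jet j : (j < M)%N -> set_block (fun _ => x) 0 v j = ext (jet d n x) j.
    by move=> lt_jM; have := v_jet j; rewrite mem_iota lt_jM /= jet_termE => ->.
  by rewrite -(fholds_eq_on _ _ le_PhiM E_jet).
exists (fun i => ext (jet d n x) i); split=> //.
have v_jet j : (j < M)%N ->
    set_block (fun _ => x) 0 (fun i : 'I_M => ext (jet d n x) i) j = ext (jet d n x) j.
  by move=> lt_jM; rewrite set_block0 // (ext_lt _ lt_jM).
split; first by apply/FBigAnd_mapP => j; rewrite mem_iota /= jet_termE => /v_jet.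
by rewrite (fholds_eq_on _ _ le_PhiM v_jet).
Qed.

Lemma derivation0 (R : nzRingType) (d : R -> R) : is_derivation d -> d 0 = 0.
Proof. by move=> [dD _]; apply: (addrI (d 0)); rewrite -dD !addr0. Qed.

Section Realization.
Variables (U : rcfType) (d : U -> U) (K : U -> Prop) (n : nat) (a : U).
Hypotheses (codfU : CODF_axioms d) (elemK : elem_sub d K).
Hypothesis dim_a : dim_over d K (jet d n a) n.

Definition in_type (Phi : form U) : Prop :=
  [/\ f_ring Phi, f_params K Phi & fholds d (@allU U) (ext (jet d n a)) Phi].

Lemma in_type_realized_iter_der0 (Phi : form U) : in_type Phi ->
  exists b, fholds d (@allU U) (ext (jet d n b)) Phi /\ iter n d b = 0.
Proof.
case=> rPhi KPhi Phi_a.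
have [lo [hi [a_in box]]] := full_dim_in_interior elemK dim_a rPhi KPhi Phi_a.
have lt_lohi i : lo i < hi i by have /andP[lo_a a_hi] := a_in i; apply: lt_trans a_hi.
have [b [b_in b0]] := codf_jets_dense codfU lt_lohi.
by exists b; split=> //; apply: box.
Qed.

Definition iter_der0F : form U := FEq (iter n (@TDer U) (TVar U 0)) TZero.

Definition realization_type (f : form U) : Prop :=
  (exists2 Phi, in_type Phi & f = jetF n Phi) \/ f = iter_der0F.

Lemma realization_type_params f : realization_type f -> f_params K f.
Proof.
case=> [[Phi [_ KPhi _] ->]|->]; first exact: jetF_params.
by split=> //; elim: n.
Qed.

Lemma realization_type_finsat (l : list (form U)) :
  (forall f, List.In f l -> realization_type f) ->
  exists x, forall f, List.In f l -> fholds d (@allU U) (fun _ => x) f.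
Proof.
move=> l_type.
suff [Phi [tPhi realizes]] : exists Phi, in_type Phi /\ forall x, iter n d x = 0 ->
    fholds d (@allU U) (ext (jet d n x)) Phi ->
    forall f, List.In f l -> fholds d (@allU U) (fun _ => x) f.
  by have [b [Phi_b b0]] := in_type_realized_iter_der0 tPhi; exists b; apply: realizes.
elim: l l_type => [|f l IH] l_type; first by exists FTrue; split=> //; split.
have [Phi [[rPhi KPhi Phi_a] realizes]] := IH (fun g lg => l_type g (or_intror lg)).
case: (l_type f (or_introl erefl)) => [[Psi [rPsi KPsi Psi_a] ->]|->].
  exists (FAnd Psi Phi); split=> // x x0 [Psi_x Phi_x] g [<-|lg]; last exact: realizes.
  exact/jetFP.
exists Phi; split=> // x x0 Phi_x g [<-|lg]; last exact: realizes.
by rewrite /= teval_iter_TDer.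
Qed.

End Realization.

Theorem lemma2p5 (U : rcfType) (d : U -> U) (K : U -> Prop) (n : nat) (a : U) :
  CODF_axioms d -> saturated_over d K -> elem_sub d K ->
  dim_over d K (jet d n a) n ->
  exists b : U, tp_eq d K (jet d n b) (jet d n a) /\
                (forall k : nat, (n <= k)%N -> iter k d b = 0).
Proof.
move=> codfU satK elemK dim_a.
have [b b_type] := satK K (ex_intro _ id (@inj_id _)) _ (@realization_type_params U d K n a)
  (realization_type_finsat codfU elemK dim_a).
have b0 : iter n d b = 0 by have := b_type _ (or_intror erefl); rewrite /= teval_iter_TDer.
exists b; split=> [f rf Kf|k le_nk].
  split=> [f_b|f_a]; last by apply/jetFP/b_type; left; exists f.
  apply: NNPP => nf_a; suff /jetFP : fholds d (@allU U) (fun _ => b) (jetF n (FNot f)) by [].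
  by apply: b_type; left; exists (FNot f).
rewrite -(subnK le_nk) iterD b0; elim: (k - n)%N => //= m ->.
exact: derivation0 codfU.1.
Qed.
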